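(* Let $\mathcal P$ be a path and let $\{p_1,\dots,p_m\}$ and $\{q_1,\dots,q_k\}$ be two different sets of plaquettes in $\mathcal B_{\mathcal P}$ such that $\bigoplus_{i=1}^m\vec\alpha^{p_i}=\bigoplus_{j=1}^k\vec\alpha^{q_j}$ when restricted to $\mathrm{Conn}(\mathcal P)$. Then for every configuration $\vec i$, $\theta_{\mathcal P}(\vec i,p_1,\dots,p_m)=\theta_{\mathcal P}(\vec i,q_1,\dots,q_k)$.
   Context: Let $\Lambda$ be a hexagonal (honeycomb) lattice embedded in a closed orientable surface, with one qubit on each edge. For an edge $j$, $\sigma^x_j,\sigma^z_j$ denote the Pauli operators on qubit $j$ and $n^{\pm}_j=\tfrac12(1\pm\sigma^z_j)$. A (string) configuration $\vec i$ is a computational basis state, viewed as a bit string assigning $0$ (empty) or $1$ (occupied) to each edge; $\vec i\oplus\vec\alpha$ is bitwise addition mod 2. For a hexagonal plaquette $p$, label its boundary edges $1,\dots,6$ cyclically (index $0$ means $6$) and its outgoing edges so that edge $12$ meets edges $6,1$; edge $7$ meets $1,2$; edge $8$ meets $2,3$; edge $9$ meets $3,4$; edge $10$ meets $4,5$; edge $11$ meets $5,6$. Define $B_p=\Big(\prod_{j=1}^6\sigma^x_j\Big)\Big(\prod_{j=1}^6(-1)^{n^-_{j-1}n^+_j}\Big)\,i^{n^-_{12}(n^-_1n^-_6-n^+_1n^+_6)}\,i^{n^-_7(n^+_1n^+_2-n^-_1n^-_2)}\,i^{n^+_8(n^-_2n^+_3-n^+_2n^-_3)}\,i^{n^-_9(n^-_3n^-_4-n^+_3n^+_4)}\,i^{n^-_{10}(n^+_4n^+_5-n^-_4n^-_5)}\,i^{n^+_{11}(n^-_5n^+_6-n^+_5n^-_6)}$;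 all $B_p$ commute pairwise and square to the identity, and the product of all $B_p$ over the lattice is the identity. Write $B_p=\prod_{j\in\partial p}\sigma^x_j\sum_{\vec i}b_p(\vec i)|\vec i\rangle\langle\vec i|$, defining the phase $b_p(\vec i)$. Let $\vec\alpha^p$ be the configuration occupied exactly on the boundary edges of $p$. A path $\mathcal P$ is a sequence of edges forming a walk; $\vec\alpha^{\mathcal P}$ is the mod-2 sum of the indicators of its edges and $X_{\mathcal P}$ the product of $\sigma^x$ over its edges. $\mathrm{Conn}(\mathcal P)$ is the set of edges of $\mathcal P$ together with all edges sharing a vertex with an edge of $\mathcal P$; $\mathcal B_{\mathcal P}$ is the set of plaquettes with at least one boundary edge in $\mathrm{Conn}(\mathcal P)$. Define $\theta_{\mathcal P}(\vec i,p_1,\dots,p_m)=\prod_{k=1}^m \frac{b_{p_k}(\vec i\oplus\vec\alpha^{\mathcal P}\oplus\bigoplus_{j<k}\vec\alpha^{p_j})}{b_{p_k}(\vec i\oplus\bigoplus_{j<k}\vec\alpha^{p_j})}$ for configurations $\vec i$ on the whole lattice. *)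

(* Honeycomb lattice on a torus (the only closed orientable
   surface carrying a honeycomb lattice), L1 x L2 unit cells. *)
From HB Require Import structures.
From mathcomp Require Import all_boot all_order all_algebra all_field.
Set Implicit Arguments. Unset Strict Implicit. Unset Printing Implicit Defensive.
Import GRing.Theory Num.Theory.
Local Open Scope ring_scope.

(* unit cells of the torus; one hexagonal plaquette per cell *)
Definition cell (L1 L2 : nat) := ('Z_L1 * 'Z_L2)%type.
(* edges (= qubits): three per cell, of kind a (0), b (1), c (2) *)
Definition edge (L1 L2 : nat) := (cell L1 L2 * 'I_3)%type.
(* vertices: two per cell, A (true) and B (false) *)
Definition vertex (L1 L2 : nat) := (cell L1 L2 * bool)%type.
(* string configurations = computational basis states = bit strings on edges *)
Definition config (L1 L2 : nat) := {ffun edge L1 L2 -> bool}.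

Definition shc L1 L2 (c : cell L1 L2) (dx : 'Z_L1) (dy : 'Z_L2) : cell L1 L2 :=
  (c.1 + dx, c.2 + dy).

Definition ea L1 L2 (c : cell L1 L2) : edge L1 L2 := (c, @Ordinal 3 0 isT).
Definition eb L1 L2 (c : cell L1 L2) : edge L1 L2 := (c, @Ordinal 3 1 isT).
Definition ec L1 L2 (c : cell L1 L2) : edge L1 L2 := (c, @Ordinal 3 2 isT).

Definition endpoints L1 L2 (e : edge L1 L2) : vertex L1 L2 * vertex L1 L2 :=
  let c := e.1 in
  match val e.2 with
  | 0 => ((c, true), (c, false))
  | 1 => ((c, true), (shc c (-1) 0, false))
  | _ => ((c, true), (shc c 0 (-1), false))
  end.

Definition incident L1 L2 (v : vertex L1 L2) (e : edge L1 L2) : bool :=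
  (v == (endpoints e).1) || (v == (endpoints e).2).

Definition other_end L1 L2 (e : edge L1 L2) (v : vertex L1 L2) : vertex L1 L2 :=
  if v == (endpoints e).1 then (endpoints e).2 else (endpoints e).1.

(* edge labels of the plaquette p (the hexagon of cell p):
   boundary edges 1..6 in cyclic order, outgoing edges 7..12 with
   12 meeting 6,1; 7 meeting 1,2; 8 meeting 2,3; 9 meeting 3,4;
   10 meeting 4,5; 11 meeting 5,6. *)
Definition pl_edge L1 L2 (p : cell L1 L2) (j : nat) : edge L1 L2 :=
  match j with
  | 1 => ea p
  | 2 => eb (shc p 1 0)
  | 3 => ec (shc p 1 0)
  | 4 => ea (shc p 1 (-1))
  | 5 => eb (shc p 1 (-1))
  | 6 => ec p
  | 7 => ec (shc p 0 1)
  | 8 => ea (shc p 1 0)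
  | 9 => eb (shc p 2%:R (-1))
  | 10 => ec (shc p 1 (-1))
  | 11 => ea (shc p 0 (-1))
  | _ => eb p
  end.

Definition bdry L1 L2 (p : cell L1 L2) : seq (edge L1 L2) :=
  [seq pl_edge p j | j <- iota 1 6].

Definition prev6 (j : nat) : nat := if j == 1%N then 6%N else j.-1.

(* n^-_j = 1 on an occupied edge, n^+_j = 1 on an empty edge *)
Definition nm L1 L2 (i : config L1 L2) (e : edge L1 L2) : int := (nat_of_bool (i e))%:Z.
Definition np L1 L2 (i : config L1 L2) (e : edge L1 L2) : int := 1 - nm i e.

(* the phase b_p(i) of B_p on the basis state |i> *)
Definition bphase L1 L2 (p : cell L1 L2) (i : config L1 L2) : algC :=
  let m j := nm i (pl_edge p j) in
  let q j := np i (pl_edge p j) in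
  (\prod_(1 <= j < 7) (-1) ^ (m (prev6 j) * q j))
  * 'i ^ (m 12%N * (m 1%N * m 6%N - q 1%N * q 6%N))
  * 'i ^ (m 7%N * (q 1%N * q 2%N - m 1%N * m 2%N))
  * 'i ^ (q 8%N * (m 2%N * q 3%N - q 2%N * m 3%N))
  * 'i ^ (m 9%N * (m 3%N * m 4%N - q 3%N * q 4%N))
  * 'i ^ (m 10%N * (q 4%N * q 5%N - m 4%N * m 5%N))
  * 'i ^ (q 11%N * (m 5%N * q 6%N - q 5%N * m 6%N)).

Definition cxor L1 L2 (i j : config L1 L2) : config L1 L2 := [ffun e => i e (+) j e].
Definition czero L1 L2 : config L1 L2 := [ffun => false].

Definition alpha_pl L1 L2 (p : cell L1 L2) : config L1 L2 := [ffun e => e \in bdry p].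

Definition xsum L1 L2 (ps : seq (cell L1 L2)) : config L1 L2 :=
  foldr (fun p acc => cxor (alpha_pl p) acc) (czero L1 L2) ps.

(* a path: a walk starting at vertex v, given by its sequence of edges *)
Fixpoint is_walk L1 L2 (v : vertex L1 L2) (es : seq (edge L1 L2)) : bool :=
  match es with
  | [::] => true
  | e :: es' => incident v e && is_walk (other_end e v) es'
  end.

Definition alpha_path L1 L2 (es : seq (edge L1 L2)) : config L1 L2 :=
  foldr (fun e acc => cxor [ffun f => f == e] acc) (czero L1 L2) es.

Definition share_vertex L1 L2 (e f : edge L1 L2) : bool :=
  [exists v : vertex L1 L2, incident v e && incident v f].

Definition inConn L1 L2 (es : seq (edge L1 L2)) (e : edge L1 L2) : bool :=
  (e \in es) || has (share_vertex e) es.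

Definition inB L1 L2 (es : seq (edge L1 L2)) (p : cell L1 L2) : bool :=
  has (inConn es) (bdry p).

Definition theta L1 L2 (es : seq (edge L1 L2)) (i : config L1 L2)
    (ps : seq (cell L1 L2)) : algC :=
  \prod_(k < size ps)
     (bphase (nth (0, 0) ps k) (cxor (cxor i (alpha_path es)) (xsum (take k ps)))
      / bphase (nth (0, 0) ps k) (cxor i (xsum (take k ps)))).

From HB Require Import structures.
From mathcomp Require Import all_boot all_order all_algebra all_field.
From mathcomp Require Import ring.
Set Implicit Arguments. Unset Strict Implicit. Unset Printing Implicit Defensive.
Import GRing.Theory Num.Theory.
Local Open Scope ring_scope.

(* b_p(i) is a power of the imaginary unit whose exponent in Z/4
   is a sum of six terms, one per corner of the hexagon p, each depending only
   on the occupations of the three edges at that corner.  Hence the exponent of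
   theta_P(i, p_1, ..., p_m) is a sum over the vertices v of a quantity that
   depends only on the order in which the plaquettes around v occur in
   p_1, ..., p_m and on i and alpha^P restricted to the three edges at v.
   A finite computation shows that, once an edge term is subtracted, this
   vertex quantity depends on the plaquette sequence only through the parity it
   induces on the edges at v; the edge term enters with opposite signs at the
   two endpoints of each edge, so it cancels in the sum.  The vertex quantity
   vanishes when alpha^P is zero near v; otherwise the three edges at v lie in
   Conn(P), where the two plaquette families have the same parity.  Only the
   duplicate-freeness of the two lists and their agreement on Conn(P) are
   used. *)

Notation Z4 := 'Z_4.

Definition phase (z : Z4) : algC := 'i ^+ z.

Lemma expCi4 : 'i ^+ 4 = 1 :> algC.
Proof. by rewrite (exprM _ 2 2) sqrCi expr2 mulN1r opprK. Qed.

Lemma phaseD (a b : Z4) : phase (a + b) = phase a * phase b.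
Proof. by rewrite /phase /= (expr_mod _ expCi4) exprD. Qed.

Lemma phase0 : phase 0 = 1.
Proof. exact: expr0. Qed.

Lemma phaseN (a : Z4) : phase (- a) = (phase a)^-1.
Proof.
have phase_neq0 : phase a != 0 by rewrite expf_neq0 ?neq0Ci.
by apply: (mulIf phase_neq0); rewrite -phaseD addNr phase0 mulVf.
Qed.

Lemma phaseB (a b : Z4) : phase (a - b) = phase a / phase b.
Proof. by rewrite phaseD phaseN. Qed.

Lemma phase_exprz (w : Z4) (z : int) : phase w ^ z = phase (w * z%:~R).
Proof.
have phaseMn n : phase w ^+ n = phase (w * n%:R).
  elim: n => [|n IHn]; first by rewrite mulr0 phase0.
  by rewrite exprS IHn -phaseD !mulr_natr mulrS.
case: z => n; first exact: phaseMn.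
by rewrite NegzE -exprnN phaseMn intrN mulrN phaseN.
Qed.

Lemma phase1 : phase 1 = 'i.
Proof. exact: expr1. Qed.

Lemma phase2 : phase 2 = -1.
Proof. exact: sqrCi. Qed.

(* Literal ordinals, unlike the ring constants of 'I_3, reduce under cbn and
   vm_compute. *)
Notation i0 := (@Ordinal 3 0 isT).
Notation i1 := (@Ordinal 3 1 isT).
Notation i2 := (@Ordinal 3 2 isT).

Lemma ord3_ind (P : 'I_3 -> Prop) : P i0 -> P i1 -> P i2 -> forall k, P k.
Proof. by move=> P0 P1 P2 [[|[|[|//]]] hk]; rewrite (bool_irrelevance hk isT). Qed.

Definition next3 (k : 'I_3) : 'I_3 := match nat_of_ord k with 0 => i1 | 1 => i2 | _ => i0 end.

Definition star := (bool * bool * bool)%type.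

Definition star_at (l : star) (k : 'I_3) : bool :=
  match nat_of_ord k with 0 => l.1.1 | 1 => l.1.2 | _ => l.2 end.

Definition star_of (f : 'I_3 -> bool) : star := (f i0, f i1, f i2).

Definition star0 : star := (false, false, false).

Definition star_xor (l m : star) : star := star_of (fun k => star_at l k (+) star_at m k).

(* Around a vertex, the three edges and the three plaquettes are both indexed
   by 'I_3, plaquette x being the one whose boundary avoids edge x. *)
Definition star_plaq (x : 'I_3) : star := star_of (fun k => k != x).

Definition star_parity (xs : seq 'I_3) : star := foldr (star_xor \o star_plaq) star0 xs.

Definition zbit (b : bool) : Z4 := (nat_of_bool b)%:R.

Definition zsign (b : bool) : Z4 := if b then -1 else 1.

(* The exponent of i in the factor of b_p attached to a corner of p at which p
   has index x (so edge x is the outgoing one), l being the star there. *)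
Definition corner_phase (x : 'I_3) (l : star) : Z4 :=
  let a := zbit l.1.1 in let b := zbit l.1.2 in let c := zbit l.2 in
  match nat_of_ord x with
  | 0 => 2 * (b * (1 - c)) + (1 - a) * (b * (1 - c) - (1 - b) * c)
  | 1 => 2 * (c * (1 - a)) + b * (a * c - (1 - a) * (1 - c))
  | _ => 2 * (a * (1 - b)) + c * ((1 - a) * (1 - b) - a * b)
  end.

Fixpoint corner_phases (xs : seq 'I_3) (l : star) : Z4 :=
  if xs is x :: xs' then corner_phase x l + corner_phases xs' (star_xor l (star_plaq x))
  else 0.

(* edge_order t k xs lists which of the two plaquettes along edge k occur in xs,
   in order; mark t k is the one recorded as true, chosen so that it is the same
   plaquette at both endpoints of the edge (t is true at A vertices). *)
Definition mark (t : bool) (k : 'I_3) : 'I_3 := if t then next3 k else next3 (next3 k).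

Definition edge_order (t : bool) (k : 'I_3) (xs : seq 'I_3) : seq bool :=
  [seq x == mark t k | x <- xs & x != k].

(* This edge correction solves the finite linear system over Z/4 expressing
   that vertex_defect depends on xs only through star_parity xs. *)
Definition order_weight (s : seq bool) : Z4 :=
  match s with [:: true] | [:: false; true] => 1 | [:: true; false] => -1 | _ => 0 end.

Definition edge_weight (t : bool) (xs : seq 'I_3) (l a : star) (k : 'I_3) : Z4 :=
  zbit (star_at a k) * zsign (star_at l k) * order_weight (edge_order t k xs).

Definition vertex_defect (t : bool) (xs : seq 'I_3) (l a : star) : Z4 :=
  corner_phases xs (star_xor l a) - corner_phases xs l
  - zsign (~~ t) * (edge_weight t xs l a i0 + edge_weight t xs l a i1 + edge_weight t xs l a i2).

Definition ord3 : seq 'I_3 := [:: i0; i1; i2].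

Definition stars : seq star :=
  [seq (xy, z) | xy <- [seq (x, y) | x <- [:: false; true], y <- [:: false; true]],
                 z <- [:: false; true]].

Definition corner_orders : seq (seq 'I_3) :=
  flatten [seq permutations [seq x <- ord3 | star_at m x] | m <- stars].

(* A shortest corner order of parity l, for every parity that occurs. *)
Definition star_canon (l : star) : seq 'I_3 := [seq x <- ord3 | star_plaq x == l].

Definition vertex_defect_canonical : bool :=
  all (fun xs => all (fun t => all (fun l => all (fun a =>
     vertex_defect t xs l a == vertex_defect t (star_canon (star_parity xs)) l a)
       stars) stars) [:: true; false]) corner_orders.

Lemma vertex_defect_canonical_ok : vertex_defect_canonical.
Proof. by vm_compute. Qed.

Lemma mem_ord3 (x : 'I_3) : x \in ord3.
Proof. by elim/ord3_ind: x. Qed.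

Lemma mem_stars (l : star) : l \in stars.
Proof. by case: l => [[[] []] []]. Qed.

Lemma star_at_of f k : star_at (star_of f) k = f k.
Proof. by elim/ord3_ind: k. Qed.

Lemma mem_corner_orders xs : uniq xs -> xs \in corner_orders.
Proof.
move=> xs_uniq; apply/flattenP.
exists (permutations [seq x <- ord3 | star_at (star_of (mem xs)) x]).
  by apply/mapP; exists (star_of (mem xs)); rewrite ?mem_stars.
rewrite mem_permutations uniq_perm ?filter_uniq // => x.
by rewrite mem_filter star_at_of mem_ord3 andbT.
Qed.

Lemma vertex_defect_parity t xs ys l a :
  uniq xs -> uniq ys -> star_parity xs = star_parity ys ->
  vertex_defect t xs l a = vertex_defect t ys l a.
Proof.
have canon zs : uniq zs ->
    vertex_defect t zs l a = vertex_defect t (star_canon (star_parity zs)) l a.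
  move=> /mem_corner_orders zs_in; have t_in : t \in [:: true; false] by case: t.
  move/allP: vertex_defect_canonical_ok => /(_ _ zs_in) /allP /(_ t t_in).
  by move=> /allP /(_ l (mem_stars l)) /allP /(_ a (mem_stars a)) /eqP.
by move=> /canon -> /canon -> ->.
Qed.

Lemma neq_next3 (k x : 'I_3) : (k != x) = (x == next3 k) || (x == next3 (next3 k)).
Proof. by elim/ord3_ind: k; elim/ord3_ind: x. Qed.

Lemma neq_mark (t : bool) (k x : 'I_3) : (x != k) = (x == mark t k) || (x == mark (~~ t) k).
Proof. by rewrite eq_sym; case: t; rewrite neq_next3 // orbC. Qed.

Lemma star_xor0 l : star_xor l star0 = l.
Proof. by case: l => [[a b] c]; rewrite /star_xor /star_of /= !addbF. Qed.

Lemma vertex_defect0 t xs l : vertex_defect t xs l star0 = 0.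
Proof.
by rewrite /vertex_defect /edge_weight star_xor0 subrr /zbit /= !mul0r !addr0 mulr0 subr0.
Qed.

Lemma pairD (U V : nmodType) (x y : U * V) : x + y = (x.1 + y.1, x.2 + y.2).
Proof. by []. Qed.

Lemma pairN (U V : zmodType) (x : U * V) : - x = (- x.1, - x.2).
Proof. by []. Qed.

Lemma pair0 (U V : nmodType) : (0 : U * V) = (0, 0).
Proof. by []. Qed.

Lemma addr_eq_subr (V : zmodType) (x y z : V) : (x + y == z) = (x == z - y).
Proof. by apply/eqP/eqP => [<- | ->]; rewrite ?addrK ?subrK. Qed.

Lemma sum_pair_bool (T : finType) (V : nmodType) (F : T * bool -> V) :
  \sum_v F v = \sum_(c : T) (F (c, true) + F (c, false)).
Proof.
rewrite (eq_bigr (fun c => \sum_(b : bool) F (c, b))) => [|c _]; last by rewrite big_bool.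
by rewrite pair_big; apply: eq_bigr => -[].
Qed.

Lemma big_ord3 (V : nmodType) (F : 'I_3 -> V) : \sum_(k < 3) F k = F i0 + F i1 + F i2.
Proof.
by rewrite !big_ord_recl big_ord0 addr0 addrA; congr (F _ + F _ + F _); apply: val_inj.
Qed.

Section Honeycomb.
Variables L1 L2 : nat.

Ltac cell_ring := apply: injective_projections; rewrite /shc ?pairD ?pairN ?pair0 /=; ring.

(* vplaq v x is the plaquette at v opposite to its edge vedge v x. *)
Definition plaq_offset (t : bool) (x : 'I_3) : cell L1 L2 :=
  match t, nat_of_ord x with
  | true, 0 => (-1, 0) | true, 1 => (0, 0) | true, _ => (-1, 1)
  | false, 0 => (0, 1) | false, 1 => (-1, 1) | false, _ => (0, 0)
  end.

Definition vplaq (v : vertex L1 L2) (x : 'I_3) : cell L1 L2 := v.1 + plaq_offset v.2 x.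

Definition edge_offset (t : bool) (k : 'I_3) : cell L1 L2 :=
  if t then 0 else match nat_of_ord k with 0 => (0, 0) | 1 => (1, 0) | _ => (0, 1) end.

Definition vedge (v : vertex L1 L2) (k : 'I_3) : edge L1 L2 := (v.1 + edge_offset v.2 k, k).

Definition vidx (v : vertex L1 L2) (p : cell L1 L2) : option 'I_3 := [pick x | vplaq v x == p].

Definition vstar (v : vertex L1 L2) (y : config L1 L2) : star := star_of (fun k => y (vedge v k)).

Lemma vplaq_inj v : injective (vplaq v).
Proof.
move=> x y /addrI; case: v.2; elim/ord3_ind: x; elim/ord3_ind: y => //= /eqP;
  by rewrite xpair_eqE ?[0 == _]eq_sym ?oppr_eq0 ?oner_eq0 ?andbF.
Qed.

Lemma incident_vedge v k : incident v (vedge v k).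
Proof.
case: v => c []; elim/ord3_ind: k;
  rewrite /incident /vedge /endpoints /= ?addr0 ?eqxx ?orbT //;
  apply/orP; right; apply/eqP; congr (_, _); cell_ring.
Qed.

Lemma mem_bdry (p c : cell L1 L2) (k : 'I_3) : ((c, k) \in bdry p) =
  match nat_of_ord k with
  | 0 => (c == p) || (c == shc p 1 (-1))
  | 1 => (c == shc p 1 0) || (c == shc p 1 (-1))
  | _ => (c == shc p 1 0) || (c == p)
  end.
Proof.
rewrite /bdry /= !inE /pl_edge /ea /eb /ec !xpair_eqE.
by elim/ord3_ind: k => /=; rewrite ?andbT ?andbF ?orbF.
Qed.

Lemma mem_bdry_vedge v k (p : cell L1 L2) :
  (vedge v k \in bdry p) = (p == vplaq v (next3 k)) || (p == vplaq v (next3 (next3 k))).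
Proof.
have eq_shc (c : cell L1 L2) a u w : (c + a == shc p u w) = (p == c + (a - (u, w))).
  by rewrite (_ : shc p u w = p + (u, w)) // addrA -subr_eq eq_sym.
case: v => c t; rewrite /vedge /vplaq mem_bdry.
case: t; elim/ord3_ind: k; rewrite /= !eq_shc ?[_ + _ == p]eq_sym;
  first [by congr (_ || _); congr (_ == _ + _); cell_ring
        | by rewrite orbC; congr (_ || _); congr (_ == _ + _); cell_ring].
Qed.

Variant vidx_spec v p : option 'I_3 -> Type :=
  | VidxSome x of vplaq v x = p : vidx_spec v p (Some x)
  | VidxNone of (forall x, vplaq v x != p) : vidx_spec v p None.

Lemma vidxP v p : vidx_spec v p (vidx v p).
Proof. by rewrite /vidx; case: pickP => [x /eqP | /(_ _) /negbT]; constructor. Qed.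

Lemma star_at_vstar v y k : star_at (vstar v y) k = y (vedge v k).
Proof. by elim/ord3_ind: k. Qed.

Lemma vstar_cxor v (y z : config L1 L2) : vstar v (cxor y z) = star_xor (vstar v y) (vstar v z).
Proof. by rewrite /vstar /star_xor /star_of /= !ffunE. Qed.

Lemma vstar_alpha_pl v p :
  vstar v (alpha_pl p) = if vidx v p is Some x then star_plaq x else star0.
Proof.
rewrite /vstar /star_plaq /star_of !ffunE !mem_bdry_vedge.
case: vidxP => [x <- | vplaq_neq]; last by rewrite ![p == _]eq_sym !(negbTE (vplaq_neq _)).
by rewrite !(inj_eq (@vplaq_inj v)) -!neq_next3.
Qed.

Lemma star_parity_pmap v ps : star_parity (pmap (vidx v) ps) = vstar v (xsum ps).
Proof.
elim: ps => [|p ps IHps]; first by rewrite /vstar /star_of !ffunE.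
rewrite /= vstar_cxor vstar_alpha_pl -IHps.
by case: (vidx v p) => //=; case: (star_parity _) => [[]].
Qed.

Lemma pmap_vidx_uniq v ps : uniq ps -> uniq (pmap (vidx v) ps).
Proof. by apply: (pmap_uniq (g := vplaq v)) => p; case: vidxP. Qed.

Lemma edge_order_pmap v t k ps :
  edge_order t k (pmap (vidx v) ps) =
  [seq p == vplaq v (mark t k) |
     p <- ps & (p == vplaq v (mark t k)) || (p == vplaq v (mark (~~ t) k))].
Proof.
rewrite /edge_order; elim: ps => //= p ps IHps; case: vidxP => [x <- | vplaq_neq] /=.
  rewrite !(inj_eq (@vplaq_inj v)) -neq_mark.
  by case: (x != k); rewrite /= ?(inj_eq (@vplaq_inj v)) IHps.
by rewrite ![p == _]eq_sym !(negbTE (vplaq_neq _)).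
Qed.

Lemma vplaq_across (c : cell L1 L2) k t :
  vplaq (c, false) (mark t k) = vplaq ((vedge (c, false) k).1, true) (mark (~~ t) k).
Proof. by case: t; elim/ord3_ind: k; cell_ring. Qed.

Lemma edge_order_endpoint v k ps :
  edge_order v.2 k (pmap (vidx v) ps) = edge_order true k (pmap (vidx ((vedge v k).1, true)) ps).
Proof.
rewrite !edge_order_pmap; case: v => c []; first by rewrite /vedge /= addr0.
by rewrite !(vplaq_across c k) /=; congr map; apply: eq_filter => p; rewrite orbC.
Qed.

Definition plaquette_phase (p : cell L1 L2) (y : config L1 L2) : Z4 :=
  \sum_v if vidx v p is Some x then corner_phase x (vstar v y) else 0.

Lemma plaquette_phase_corners p y : plaquette_phase p y =
  \sum_(x < 3) (corner_phase x (vstar (p - plaq_offset true x, true) y)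
              + corner_phase x (vstar (p - plaq_offset false x, false) y)).
Proof.
have vidx_sum v : (if vidx v p is Some x then corner_phase x (vstar v y) else 0)
    = \sum_(x < 3) if vplaq v x == p then corner_phase x (vstar v y) else 0.
  case: vidxP => [x <- | vplaq_neq]; last first.
    by rewrite big1 // => x _; rewrite (negbTE (vplaq_neq x)).
  rewrite (bigD1 x) //= eqxx big1 ?addr0 // => z /negbTE zx.
  by rewrite (inj_eq (@vplaq_inj v)) zx.
rewrite /plaquette_phase (eq_bigr _ (fun v _ => vidx_sum v)) exchange_big /=.
apply: eq_bigr => x _; rewrite sum_pair_bool big_split.
have corner t :
    \sum_(c : cell L1 L2) (if vplaq (c, t) x == p then corner_phase x (vstar (c, t) y) else 0)
    = corner_phase x (vstar (p - plaq_offset t x, t) y).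
  by rewrite -big_mkcond (eq_bigl _ _ (fun c => addr_eq_subr c (plaq_offset t x) p)) big_pred1_eq.
by rewrite !corner.
Qed.

Definition corner_labels (t : bool) (x : 'I_3) : nat * nat * nat :=
  match t, nat_of_ord x with
  | true, 0 => (8, 2, 3) | true, 1 => (1, 12, 6) | true, _ => (4, 5, 10)
  | false, 0 => (11, 5, 6) | false, 1 => (4, 9, 3) | false, _ => (1, 2, 7)
  end%N.

Lemma vstar_corner p t x y : vstar (p - plaq_offset t x, t) y =
  let: (j0, j1, j2) := corner_labels t x in
  (y (pl_edge p j0), y (pl_edge p j1), y (pl_edge p j2)).
Proof.
case: t; elim/ord3_ind: x; rewrite /vstar /star_of /=; congr (_, _, _); congr (y _);
  rewrite /pl_edge /ea /eb /ec /vedge /=; congr (_, _); cell_ring.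
Qed.

Lemma bphaseE p y : bphase p y = phase (plaquette_phase p y).
Proof.
rewrite plaquette_phase_corners big_ord3 !vstar_corner.
cbn [corner_labels corner_phase nat_of_ord fst snd].
rewrite /bphase; do 6!rewrite big_ltn //; rewrite big_geq // mulr1.
rewrite -phase2 -phase1 !phase_exprz -!phaseD; congr phase.
by rewrite /prev6 /= /np /nm /zbit; ring.
Qed.

Lemma cxor0 (y : config L1 L2) : cxor y (czero L1 L2) = y.
Proof. by apply/ffunP => e; rewrite !ffunE addbF. Qed.

Lemma cxorA (x y z : config L1 L2) : cxor x (cxor y z) = cxor (cxor x y) z.
Proof. by apply/ffunP => e; rewrite !ffunE addbA. Qed.

Lemma cxorAC (x y z : config L1 L2) : cxor (cxor x y) z = cxor (cxor x z) y.
Proof. by apply/ffunP => e; rewrite !ffunE addbAC. Qed.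

(* The exponent of the product of the b_(p_k) evaluated at
   y + alpha^(p_1) + ... + alpha^(p_(k-1)), arranged as a sum over vertices. *)
Definition sequence_phase (ps : seq (cell L1 L2)) (y : config L1 L2) : Z4 :=
  \sum_v corner_phases (pmap (vidx v) ps) (vstar v y).

Lemma sequence_phase_cons p ps y :
  sequence_phase (p :: ps) y = plaquette_phase p y + sequence_phase ps (cxor y (alpha_pl p)).
Proof.
rewrite /sequence_phase /plaquette_phase -big_split; apply: eq_bigr => v _ /=.
by rewrite vstar_cxor vstar_alpha_pl; case: (vidx v p) => //=; rewrite star_xor0 add0r.
Qed.

Lemma prod_bphase_ratio (a y : config L1 L2) ps :
  \prod_(k < size ps) (bphase (nth (0, 0) ps k) (cxor (cxor y a) (xsum (take k ps)))
                       / bphase (nth (0, 0) ps k) (cxor y (xsum (take k ps))))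
  = phase (sequence_phase ps (cxor y a) - sequence_phase ps y).
Proof.
elim: ps y => [|p ps IHps] y; first by rewrite big_ord0 /sequence_phase !big1 // subrr phase0.
rewrite big_ord_recl -[nth _ _ ord0]/p -[take ord0 _]/[::] -[xsum [::]]/(czero L1 L2) !cxor0.
under eq_bigr => k _ do rewrite lift0 /= !cxorA (cxorAC y a).
rewrite IHps !sequence_phase_cons !bphaseE -phaseB -phaseD (cxorAC y a).
by congr phase; rewrite opprD addrACA.
Qed.

Lemma sum_signed_vedges_eq0 (T : edge L1 L2 -> Z4) :
  \sum_v zsign (~~ v.2) * (T (vedge v i0) + T (vedge v i1) + T (vedge v i2)) = 0.
Proof.
have shift (k : 'I_3) (d : cell L1 L2) :
    \sum_(c : cell L1 L2) T (c + d, k) = \sum_(c : cell L1 L2) T (c, k).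
  by rewrite [RHS](reindex_inj (addIr d)).
rewrite sum_pair_bool; under eq_bigr do rewrite /= mul1r mulN1r.
by rewrite big_split sumrN !big_split /vedge /= !shift subrr.
Qed.

Lemma sequence_phase_defect ps (y a : config L1 L2) :
  sequence_phase ps (cxor y a) - sequence_phase ps y =
  \sum_v vertex_defect v.2 (pmap (vidx v) ps) (vstar v y) (vstar v a).
Proof.
pose T e :=
  zbit (a e) * zsign (y e) * order_weight (edge_order true e.2 (pmap (vidx (e.1, true)) ps)).
have weight v k : edge_weight v.2 (pmap (vidx v) ps) (vstar v y) (vstar v a) k = T (vedge v k).
  by rewrite /edge_weight !star_at_vstar edge_order_endpoint.
rewrite /sequence_phase; under eq_bigr do rewrite vstar_cxor.
under [RHS]eq_bigr => v _ do rewrite /vertex_defect !weight.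
by rewrite [RHS]sumrB sum_signed_vedges_eq0 subr0 sumrB.
Qed.

Lemma alpha_path_mem (es : seq (edge L1 L2)) e : alpha_path es e -> e \in es.
Proof.
elim: es => [|f es IHes]; first by rewrite /alpha_path /= ffunE.
rewrite /alpha_path /= -/(alpha_path es) !ffunE in_cons.
by case: (e == f) => //= /IHes ->; rewrite orbT.
Qed.

Lemma inConn_vedge es v k :
  vstar v (alpha_path es) != star0 -> inConn es (vedge v k).
Proof.
move=> alpha_v; have /existsP [j alpha_j] : [exists j, alpha_path es (vedge v j)].
  apply: contraTT alpha_v => /existsPn alpha_nv.
  by rewrite negbK /vstar /star_of !(negbTE (alpha_nv _)).
apply/orP; right; apply/hasP; exists (vedge v j); first exact: alpha_path_mem.
by apply/existsP; exists v; rewrite !incident_vedge.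
Qed.

End Honeycomb.

Theorem lemma2 (L1 L2 : nat) (hL1 : (3 <= L1)%N) (hL2 : (3 <= L2)%N)
    (v0 : vertex L1 L2) (es : seq (edge L1 L2)) (hwalk : is_walk v0 es)
    (ps qs : seq (cell L1 L2)) (hps : uniq ps) (hqs : uniq qs)
    (hpsB : all (inB es) ps) (hqsB : all (inB es) qs)
    (hdiff : [set p in ps] != [set p in qs])
    (hres : forall e : edge L1 L2, inConn es e -> xsum ps e = xsum qs e)
    (i : config L1 L2) :
  theta es i ps = theta es i qs.
Proof.
rewrite /theta !prod_bphase_ratio !sequence_phase_defect; congr phase.
apply: eq_bigr => v _; set a := vstar v (alpha_path es).
have [/eqP a0 | a_neq0] := boolP (a == star0); first by rewrite a0 !vertex_defect0.
apply: vertex_defect_parity; rewrite ?pmap_vidx_uniq // !star_parity_pmap.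
by rewrite /vstar /star_of !hres //; apply: inConn_vedge.
Qed.
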